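(* Let $\alpha\neq0$, $s,t\in\mathbb{C}$, $w=\tfrac12(s+t)$ with $w\notin\mathbb{Z}$, $n$ a positive integer, $c\in\mathbb{Z}$, $k\in\{-n,-n+2,\dots,n\}$, $u\in\mathbb{C}$, and $n_\pm(k)=\tfrac12(n\pm k)$. Then the following polynomial identities in $z$ hold: $$-\alpha^{-1}\Big\{[\alpha(-u+c+1+s)-z]\Delta_--\alpha u\Delta_+\Big\}\psi^{(n)}(z|0)^{c+k+1}_{c+1}=\frac{n_-(k)(c+1-n_-(k)+w-u)}{c+k+1+w}\,\psi^{(n)}(z|0)^{c+k+2}_{c}+\frac{(u+n_+(k))(c+1+n_+(k)+w)}{c+k+1+w}\,\psi^{(n)}(z|0)^{c+k}_{c},$$ $$-\alpha^{-1}\Big\{[\alpha(-u-c+1-t)-z]\Delta_--\alpha u\Delta_+\Big\}\psi^{(n)}(z|0)^{c+k-1}_{c-1}=\frac{n_+(k)(c-1+n_+(k)+w+u)}{c+k-1+w}\,\psi^{(n)}(z|0)^{c+k-2}_{c}+\frac{(u+n_-(k))(c-1-n_-(k)+w)}{c+k-1+w}\,\psi^{(n)}(z|0)^{c+k}_{c}.$$ Thus these coefficients are the weights $W^{(n,1)}\left(\begin{smallmatrix} c+k+1& c+1\\ c+k+1\pm1& c\end{smallmatrix}\middle|u\right)$ and $W^{(n,1)}\left(\begin{smallmatrix} c+k-1& c-1\\ c+k-1\mp1& c\end{smallmatrix}\middle|u\right)$ respectively.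
   Context: $[\Delta_\pm f](z)=\tfrac12(f(z+\alpha)\pm f(z-\alpha))$; $z$ acts by multiplication. For a positive integer $n$, integers $a,b$ and $u\in\mathbb{C}$, with $n_+=\tfrac12(n+b-a)$, $n_-=\tfrac12(n-b+a)$: if $n_\pm$ are nonnegative integers, $\psi^{(n)}(z|u)^a_b=(-1)^n\prod_{p=1}^{n_+}[z-\alpha(u+n-a-2p+1-t)]\prod_{q=1}^{n_-}[z-\alpha(u+n+a-2q+1+s)]$; otherwise $\psi^{(n)}(z|u)^a_b=0$. *)

From HB Require Import structures.
From mathcomp Require Import all_boot all_order all_algebra.
From mathcomp Require Import Rstruct.
From mathcomp.real_closed Require Import complex.
Set Implicit Arguments. Unset Strict Implicit. Unset Printing Implicit Defensive.
Import Order.TTheory GRing.Theory Num.Theory.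
Local Open Scope ring_scope.

Definition C : Type := complex Rdefinitions.R.
HB.instance Definition _ := Num.ClosedField.on C.

Definition Dplus (alpha : C) (f : C -> C) (z : C) : C :=
  (f (z + alpha) + f (z - alpha)) / 2.
Definition Dminus (alpha : C) (f : C -> C) (z : C) : C :=
  (f (z + alpha) - f (z - alpha)) / 2.

(* psi^{(n)}(z|u)^a_b, as a function of z, with parameters alpha, s, t.
   n_+ = (n+b-a)/2, n_- = (n-b+a)/2 = n - n_+; nonzero branch iff both are
   nonnegative integers, i.e. d := n+b-a is even with 0 <= d <= 2n. *)
Definition psi (alpha s t : C) (n : nat) (u : C) (a b : int) (z : C) : C :=
  let d : int := (n%:Z + b - a)%R in
  if (0 <= d) && (d <= (2 * n)%N%:Z) && ~~ odd `|d|%N then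
    let np := (`|d| %/ 2)%N in
    let nm := (n - np)%N in
    (-1) ^+ n
    * (\prod_(1 <= p < np.+1)
         (z - alpha * (u + n%:R - a%:~R - 2 * p%:R + 1 - t)))
    * (\prod_(1 <= q < nm.+1)
         (z - alpha * (u + n%:R + a%:~R - 2 * q%:R + 1 + s)))
  else 0.

From HB Require Import structures.
From mathcomp Require Import all_boot all_order all_algebra.
From mathcomp Require Import Rstruct.
From mathcomp.real_closed Require Import complex.
From mathcomp Require Import ring zify.
Set Implicit Arguments. Unset Strict Implicit. Unset Printing Implicit Defensive.
Import Order.TTheory GRing.Theory Num.Theory.
Local Open Scope ring_scope.

(* Writing [rising_prod alpha m y z] for the product of [z - alpha (y + 2j)],
   [j < m], the polynomial psi^(n)(z|u)^a_b is (-1)^n times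
   [rising_prod alpha n_+ (u+1-b-t) z * rising_prod alpha n_- (u+1+b+s) z]:
   it depends on a only through n_+ and n_-, and the shift z -> z +- alpha
   moves both bases by -+1.  Peeling one linear factor off each end of these
   products reduces both identities to a single rational identity between
   two such products ([rising_contiguity]); the second identity is the first
   one with the roles of the two factors exchanged.  When n_+ or n_- would
   become -1, the corresponding psi vanishes, and so does its coefficient. *)

Section RisingProduct.

Variables (R : comNzRingType) (alpha : R).

Definition rising_prod (m : nat) (y z : R) : R :=
  \prod_(j < m) (z - alpha * (y + 2 * j%:R)).

Lemma rising_prod0 y z : rising_prod 0 y z = 1.
Proof. by rewrite /rising_prod big_ord0. Qed.

Lemma rising_prodS m y z :
  rising_prod m.+1 y z = rising_prod m y z * (z - alpha * (y + 2 * m%:R)).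
Proof. by rewrite /rising_prod big_ord_recr. Qed.

Lemma rising_prodSl m y z :
  rising_prod m.+1 y z = (z - alpha * y) * rising_prod m (y + 2) z.
Proof.
rewrite /rising_prod big_ord_recl mulr0 addr0; congr (_ * _).
by apply: eq_bigr => j _; rewrite lift0; ring.
Qed.

Lemma rising_prod_addz m y z :
  rising_prod m y (z + alpha) = rising_prod m (y - 1) z.
Proof. by apply: eq_bigr => j _; ring. Qed.

Lemma rising_prod_subz m y z :
  rising_prod m y (z - alpha) = rising_prod m (y + 1) z.
Proof. by apply: eq_bigr => j _; ring. Qed.

Lemma rising_prod_rev m e z :
  \prod_(1 <= p < m.+1) (z - alpha * (e - 2 * p%:R))
  = rising_prod m (e - 2 * m%:R) z.
Proof.
elim: m => [|m IHm]; first by rewrite big_geq // rising_prod0.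
rewrite big_nat_recr //= IHm rising_prodSl [RHS]mulrC.
by congr (rising_prod _ _ _ * _); ring.
Qed.

End RisingProduct.

Lemma exists_sum_diff (n : nat) (k : int) :
  - (n%:Z) <= k -> k <= n%:Z -> ~~ odd `|(n%:Z + k)%R|%N ->
  exists P Q : nat, n = (P + Q)%N /\ k = Q%:Z - P%:Z.
Proof.
move=> hk1 hk2 k_even; set m := `|(n%:Z + k)%R|%N.
have hm : n%:Z + k = m%:Z by rewrite /m gez0_abs //; lia.
have m_half := odd_double_half m; rewrite (negbTE k_even) add0n -mul2n in m_half.
by exists (n - m./2)%N, m./2; lia.
Qed.

Lemma intr_addr_neq0 (w : C) (m : int) :
  (forall j : int, w != j%:~R) -> m%:~R + w != 0.
Proof.
by move=> w_nonint; apply: contra (w_nonint (- m)); rewrite intrN -addr_eq0 addrC.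
Qed.

Lemma psi_rising (alpha s t u y x : C) (n np nm : nat) (a b : int) :
  n = (np + nm)%N -> n%:Z + b - a = (2 * np)%N%:Z ->
  y = u + 1 - b%:~R - t -> x = u + 1 + b%:~R + s ->
  psi alpha s t n u a b =1
    (fun z => (-1) ^+ n * (rising_prod alpha np y z * rising_prod alpha nm x z)).
Proof.
move=> hn hd -> -> z; rewrite /psi hd absz_nat.
have -> : (0 <= (2 * np)%N%:Z) && ((2 * np)%N%:Z <= (2 * n)%N%:Z) && ~~ odd (2 * np).
  by rewrite lez_nat leq_mul2l hn leq_addr orbT mul2n odd_double.
have {hd} -> : a = n%:Z + b - (2 * np)%N%:Z by rewrite -hd; ring.
rewrite mulKn //= -mulrA; subst n; rewrite addKn; congr (_ * (_ * _)).
- rewrite -[u + 1 - _ - t](addrK (2 * np%:R)) -rising_prod_rev.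
  by apply: eq_bigr => p _; ring.
- rewrite -[u + 1 + _ + s](addrK (2 * nm%:R)) -rising_prod_rev.
  by apply: eq_bigr => q _; ring.
Qed.

Lemma psi_eq0 (alpha s t u z : C) (n : nat) (a b : int) :
  (n%:Z + b - a < 0) || ((2 * n)%N%:Z < n%:Z + b - a) ->
  psi alpha s t n u a b z = 0.
Proof.
rewrite /psi => hd; case: ifP => // /andP[/andP[hd0 hd2] _].
by rewrite !ltNge hd0 hd2 in hd.
Qed.

Lemma double_neq0 (a b : C) : a != 0 -> a * 2 = b -> b != 0.
Proof. by move=> a_neq0 <-; rewrite mulf_neq0 // pnatr_eq0. Qed.

Lemma rising_contiguity (alpha kappa u X Y z : C) (P Q : nat) (f : C -> C) :
  alpha != 0 -> (X - Y) / 2 + Q%:R - P%:R != 0 ->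
  f =1 (fun x => kappa * (rising_prod alpha P Y x * rising_prod alpha Q X x)) ->
  - alpha^-1 * ((alpha * (X - 1 - u) - z) * Dminus alpha f z
                - alpha * u * Dplus alpha f z)
  = P%:R * ((X - Y) / 2 - P%:R - u) / ((X - Y) / 2 + Q%:R - P%:R)
      * (kappa * (rising_prod alpha P.-1 (Y + 1) z * rising_prod alpha Q.+1 (X - 1) z))
    + (u + Q%:R) * ((X - Y) / 2 + Q%:R) / ((X - Y) / 2 + Q%:R - P%:R)
      * (kappa * (rising_prod alpha P (Y + 1) z * rising_prod alpha Q (X - 1) z)).
Proof.
move=> alpha_neq0 den_neq0 hf; rewrite /Dminus /Dplus !hf.
rewrite !rising_prod_addz !rising_prod_subz.
have two_neq0 : (2 : C) != 0 by rewrite pnatr_eq0.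
have shift2 (v : C) : v - 1 + 2 = v + 1 by ring.
move: den_neq0; clear hf; case: P => [|P]; case: Q => [|Q] den_neq0;
  rewrite ?(rising_prodSl _ _ (_ - 1)) ?shift2 ?rising_prodS ?rising_prod0 /=;
  field; rewrite ?alpha_neq0 ?two_neq0 ?andbT;
  by apply: double_neq0 den_neq0 _; field.
Qed.

Lemma psi_contiguity_up (alpha s t u : C) (n P Q : nat) (c k : int) :
  alpha != 0 -> n = (P + Q)%N -> k = Q%:Z - P%:Z ->
  let w := (s + t) / 2 in
  let npl := (n%:R + k%:~R) / 2 : C in
  let nmi := (n%:R - k%:~R) / 2 : C in
  (c + k)%:~R + 1 + w != 0 ->
  forall z : C,
    - alpha^-1 *
      ((alpha * (- u + c%:~R + 1 + s) - z)
         * Dminus alpha (psi alpha s t n 0 (c + k + 1) (c + 1)) z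
       - alpha * u * Dplus alpha (psi alpha s t n 0 (c + k + 1) (c + 1)) z)
    = nmi * (c%:~R + 1 - nmi + w - u) / ((c + k)%:~R + 1 + w)
        * psi alpha s t n 0 (c + k + 2) c z
      + (u + npl) * (c%:~R + 1 + npl + w) / ((c + k)%:~R + 1 + w)
        * psi alpha s t n 0 (c + k) c z.
Proof.
move=> alpha_neq0 hn hk w npl nmi den_neq0 z; subst n k.
rewrite /npl /nmi /w {npl nmi w} in den_neq0 *.
set Y := - c%:~R - t; set X := c%:~R + 2 + s.
have hF : psi alpha s t (P + Q) 0 (c + (Q%:Z - P%:Z) + 1) (c + 1) =1
    (fun x => (-1) ^+ (P + Q) * (rising_prod alpha P Y x * rising_prod alpha Q X x)).
  by apply: psi_rising; rewrite /Y /X; ring.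
have den_eq : (X - Y) / 2 + Q%:R - P%:R = (c + (Q%:Z - P%:Z))%:~R + 1 + (s + t) / 2.
  by rewrite /X /Y; field.
rewrite (_ : alpha * (- u + c%:~R + 1 + s) = alpha * (X - 1 - u)); last first.
  by rewrite /X; ring.
rewrite (rising_contiguity u z alpha_neq0 _ hF) ?den_eq //.
rewrite (@psi_rising _ _ _ _ (Y + 1) (X - 1) _ P Q (c + (Q%:Z - P%:Z)) c) /=;
  rewrite /Y /X; try ring.
move: den_neq0 {hF den_eq}; case: P => [|P] den_neq0; [
  rewrite (@psi_eq0 _ _ _ _ _ _ (_ + 2) c); last by lia |
  rewrite (@psi_rising _ _ _ _ (- c%:~R - t + 1) (c%:~R + 2 + s - 1) _ P Q.+1)
    /=; [|ring..] ];
by field; apply: double_neq0 den_neq0 _; field.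
Qed.

Lemma psi_contiguity_down (alpha s t u : C) (n P Q : nat) (c k : int) :
  alpha != 0 -> n = (P + Q)%N -> k = Q%:Z - P%:Z ->
  let w := (s + t) / 2 in
  let npl := (n%:R + k%:~R) / 2 : C in
  let nmi := (n%:R - k%:~R) / 2 : C in
  (c + k)%:~R - 1 + w != 0 ->
  forall z : C,
    - alpha^-1 *
      ((alpha * (- u - c%:~R + 1 - t) - z)
         * Dminus alpha (psi alpha s t n 0 (c + k - 1) (c - 1)) z
       - alpha * u * Dplus alpha (psi alpha s t n 0 (c + k - 1) (c - 1)) z)
    = npl * (c%:~R - 1 + npl + w + u) / ((c + k)%:~R - 1 + w)
        * psi alpha s t n 0 (c + k - 2) c z
      + (u + nmi) * (c%:~R - 1 - nmi + w) / ((c + k)%:~R - 1 + w)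
        * psi alpha s t n 0 (c + k) c z.
Proof.
move=> alpha_neq0 hn hk w npl nmi den_neq0 z; subst n k.
rewrite /npl /nmi /w {npl nmi w} in den_neq0 *.
set X := 2 - c%:~R - t; set Y := c%:~R + s.
have hF : psi alpha s t (P + Q) 0 (c + (Q%:Z - P%:Z) - 1) (c - 1) =1
    (fun x => (-1) ^+ (P + Q) * (rising_prod alpha Q Y x * rising_prod alpha P X x)).
  move=> x /=; rewrite (mulrC (rising_prod alpha Q Y x)).
  by apply: psi_rising; rewrite /Y /X; ring.
have den_eq : (X - Y) / 2 + P%:R - Q%:R
              = - ((c + (Q%:Z - P%:Z))%:~R - 1 + (s + t) / 2).
  by rewrite /X /Y; field.
rewrite (_ : alpha * (- u - c%:~R + 1 - t) = alpha * (X - 1 - u)); last first.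
  by rewrite /X; ring.
rewrite (rising_contiguity u z alpha_neq0 _ hF) ?den_eq ?oppr_eq0 //.
rewrite (@psi_rising _ _ _ _ (X - 1) (Y + 1) _ P Q (c + (Q%:Z - P%:Z)) c) /=;
  rewrite /Y /X; try ring.
move: den_neq0 {hF den_eq}; case: Q => [|Q] den_neq0; [
  rewrite (@psi_eq0 _ _ _ _ _ _ (_ - 2) c); last by lia |
  rewrite (@psi_rising _ _ _ _ (2 - c%:~R - t - 1) (c%:~R + s + 1) _ P.+1 Q)
    /=; [|ring..] ];
by field; apply: double_neq0 den_neq0 _; field.
Qed.

Theorem mainTheorem10 (alpha s t : C) (n : nat) (c k : int) (u : C) :
  alpha != 0 ->
  (forall m : int, (s + t) / 2 != m%:~R) ->
  (0 < n)%N ->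
  - (n%:Z) <= k -> k <= n%:Z -> ~~ odd `|(n%:Z + k)%R|%N ->
  let w := (s + t) / 2 in
  let npl := (n%:R + k%:~R) / 2 : C in
  let nmi := (n%:R - k%:~R) / 2 : C in
  forall z : C,
    - alpha^-1 *
      ((alpha * (- u + c%:~R + 1 + s) - z)
         * Dminus alpha (psi alpha s t n 0 (c + k + 1) (c + 1)) z
       - alpha * u * Dplus alpha (psi alpha s t n 0 (c + k + 1) (c + 1)) z)
    = nmi * (c%:~R + 1 - nmi + w - u) / ((c + k)%:~R + 1 + w)
        * psi alpha s t n 0 (c + k + 2) c z
      + (u + npl) * (c%:~R + 1 + npl + w) / ((c + k)%:~R + 1 + w)
        * psi alpha s t n 0 (c + k) c z
  /\
    - alpha^-1 *
      ((alpha * (- u - c%:~R + 1 - t) - z)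
         * Dminus alpha (psi alpha s t n 0 (c + k - 1) (c - 1)) z
       - alpha * u * Dplus alpha (psi alpha s t n 0 (c + k - 1) (c - 1)) z)
    = npl * (c%:~R - 1 + npl + w + u) / ((c + k)%:~R - 1 + w)
        * psi alpha s t n 0 (c + k - 2) c z
      + (u + nmi) * (c%:~R - 1 - nmi + w) / ((c + k)%:~R - 1 + w)
        * psi alpha s t n 0 (c + k) c z.
Proof.
move=> alpha_neq0 w_nonint _ hk1 hk2 k_even w npl nmi z.
have [P [Q [hn hk]]] := exists_sum_diff hk1 hk2 k_even.
split.
- apply: psi_contiguity_up alpha_neq0 hn hk _ z.
  by have := intr_addr_neq0 (c + k + 1) w_nonint; rewrite intrD.
- apply: psi_contiguity_down alpha_neq0 hn hk _ z.
  by have := intr_addr_neq0 (c + k - 1) w_nonint; rewrite intrB.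
Qed.
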